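(* For $h\in\mathbb N$ and $0\le m<h$ let $c(m;h)=\frac{\#\{0\le x<h: x^2\equiv m\bmod h\}}{h}$. Then the sequence of squares $(\ell^2)_{\ell\ge1}$ distributes regularly within residue classes, i.e. $\lim_{L\to\infty}\frac1L\#\{\ell\le L:\ell^2\equiv m\bmod h\}=c(m;h)$ for all $h,m$ and $c(m;h_1h_2)=c(m;h_1)c(m;h_2)$ for coprime $h_1,h_2$. Moreover, for every $k\ge2$ and every $k$-DFA $(Q,\{0,\dots,k-1\},\delta,q_0)$ admitting a synchronizing word, $$\lim_{\lambda\to\infty}\sum_{0\le m<k^\lambda,\ m\notin S_\lambda}c(m;k^\lambda)=0.$$
   Context: A word $w$ over $\{0,\dots,k-1\}$ is synchronizing for the DFA if $\delta(q,w)=\delta(q',w)$ for all states $q,q'$ ($\delta$ extended to words letter by letter). $S$ is the set of $n\ge0$ whose base-$k$ expansion $(n)_k$ (most significant digit first, $(0)_k$ empty) is synchronizing, and $S_\lambda=S\cap[0,k^\lambda-1]$. *)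

From Stdlib Require Import Reals.
From mathcomp Require Import all_boot.
Set Implicit Arguments. Unset Strict Implicit. Unset Printing Implicit Defensive.

Definition csq (m h : nat) : R :=
  Rdiv (INR (count (fun x => x ^ 2 == m %[mod h]) (iota 0 h))) (INR h).

Definition count_sq (m h L : nat) : nat :=
  count (fun l => l ^ 2 == m %[mod h]) (iota 1 L).

(* base-k digits, most significant first; (0)_k is empty.  Fuel n suffices for k >= 2. *)
Fixpoint digits_aux (k fuel n : nat) : seq nat :=
  match fuel with
  | 0 => [::]
  | f.+1 => if n == 0 then [::] else rcons (digits_aux k f (n %/ k)) (n %% k)
  end.
Definition digits (k n : nat) : seq nat := digits_aux k n n.

(* the base-k expansion as a word over {0,...,k-1} (all digits are < k when k >= 1) *)
Definition word_of (k n : nat) : seq 'I_k := pmap insub (digits k n).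

Definition delta_star (Q : finType) (k : nat) (delta : Q -> 'I_k -> Q)
  (q : Q) (w : seq 'I_k) : Q := foldl delta q w.

Definition synchronizing (Q : finType) (k : nat) (delta : Q -> 'I_k -> Q)
  (w : seq 'I_k) : bool :=
  [forall q, forall q', delta_star delta q w == delta_star delta q' w].

Definition inS (Q : finType) (k : nat) (delta : Q -> 'I_k -> Q) (n : nat) : bool :=
  synchronizing delta (word_of k n).

Definition inS_lambda (Q : finType) (k : nat) (delta : Q -> 'I_k -> Q) (lam n : nat) : bool :=
  inS delta n && (n < k ^ lam).

From Stdlib Require Import Reals Lra.
From mathcomp Require Import all_boot zify.
Set Implicit Arguments. Unset Strict Implicit. Unset Printing Implicit Defensive.

(* Squares are h-periodic modulo h, so the squares among 1..L congruent to m have density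
   c(m;h); the Chinese remainder bijection [0, h1 h2) ~ [0, h1) x [0, h2) makes c multiplicative.

   Fix a synchronizing word w, let n = |w| + 1 and let V be the number written 1w in base k.
   Call x < k^λ a hit if some n-digit window of x^2 mod k^λ reads V: then w is a factor of the
   expansion of x^2 mod k^λ, which therefore lies in S, so it suffices that the proportion f(λ)
   of non-hits tends to 0.  Hits survive lifting x to k^λ t + x, so f is nonincreasing.  If no
   p^j with p | k prime divides x and j + n <= λ, then (k^λ t + x)^2 = x^2 + 2xt k^λ modulo
   k^(λ+j+n), and 2xt = D (mod k^(j+n)) is solvable for every multiple D of k^j, so some lift of
   x hits at position λ + j.  At most ω(k) k^λ / 2^j residues are divisible by such a p^j, hence
   f(λ+j+n) <= (1 - k^-(j+n)) f(λ) + k^-(j+n) ω(k) / 2^j, which forces f -> 0. *)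

Lemma synchronizing_cat (Q : finType) k (delta : Q -> 'I_k -> Q) u w v :
  synchronizing delta w -> synchronizing delta (u ++ w ++ v).
Proof.
move=> /forallP sync_w; apply/forallP => q; apply/forallP => q'.
rewrite /delta_star !foldl_cat.
have /forallP/(_ (foldl delta q' u))/eqP := sync_w (foldl delta q u).
by rewrite /delta_star => ->.
Qed.

Section Digits.
Variable k : nat.
Hypothesis k_gt1 : 1 < k.

Let k_gt0 : 0 < k. Proof. exact: ltnW. Qed.
Let expk_gt0 e : 0 < k ^ e. Proof. by rewrite expn_gt0 k_gt0. Qed.

Lemma digits_aux_fuel f1 f2 n : n <= f1 -> n <= f2 ->
  digits_aux k f1 n = digits_aux k f2 n.
Proof.
elim: f1 f2 n => [|f1 IH] [|f2] n //= le_n1 le_n2; case: eqP => // /eqP n_neq0.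
- by move: le_n1; rewrite leqn0 (negbTE n_neq0).
- by move: le_n2; rewrite leqn0 (negbTE n_neq0).
have : n %/ k < n by rewrite ltn_Pdiv // lt0n.
by move=> lt_div; congr rcons; apply: IH; lia.
Qed.

Lemma digitsE n :
  digits k n = if n == 0 then [::] else rcons (digits k (n %/ k)) (n %% k).
Proof.
rewrite /digits; case: n => [//|n] /=; congr rcons; apply: digits_aux_fuel => //.
by rewrite -ltnS ltn_Pdiv.
Qed.

Fixpoint low_digits m b : seq nat :=
  if m is m'.+1 then rcons (low_digits m' (b %/ k)) (b %% k) else [::].

Lemma digits_mulD m a b : 0 < a -> b < k ^ m ->
  digits k (a * k ^ m + b) = digits k a ++ low_digits m b.
Proof.
elim: m b => [|m IH] b a_gt0 b_lt /=.
  by move: b_lt; rewrite expn0 ltnS leqn0 => /eqP ->; rewrite muln1 addn0 cats0.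
have b_div_lt : b %/ k < k ^ m by rewrite ltn_divLR // -expnSr.
rewrite digitsE addn_eq0 muln_eq0 !eqn0Ngt a_gt0 expk_gt0 /=.
rewrite expnSr mulnA {1}(divn_eq b k) addnA -mulnDl.
rewrite divnMDl // modnMDl (divn_small (ltn_pmod _ k_gt0)) addn0.
by rewrite IH // rcons_cat.
Qed.

Definition numeral (s : seq nat) : nat := foldl (fun v d => v * k + d) 0 s.

Lemma numeral_rcons s d : numeral (rcons s d) = numeral s * k + d.
Proof. by rewrite /numeral foldl_rcons. Qed.

Lemma numeral_lt s : all (gtn k) s -> numeral s < k ^ size s.
Proof.
elim/last_ind: s => [//|s d IH]; rewrite all_rcons => /andP [d_lt /IH lt_s].
rewrite numeral_rcons size_rcons expnSr.
apply: (@leq_trans ((numeral s).+1 * k)); first by rewrite mulSn addnC ltn_add2r.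
by rewrite leq_mul2r lt_s orbT.
Qed.

Lemma low_digits_numeral s : all (gtn k) s -> low_digits (size s) (numeral s) = s.
Proof.
elim/last_ind: s => [//|s d IH]; rewrite all_rcons => /andP [d_lt /IH low_s].
rewrite numeral_rcons size_rcons /= divnMDl // modnMDl.
by rewrite (divn_small d_lt) (modn_small d_lt) addn0 low_s.
Qed.

Definition window n i y := y %/ k ^ i %% k ^ n.

Lemma window_addl n i j y : window n (i + j) y = window n j (y %/ k ^ i).
Proof. by rewrite /window expnD divnMA. Qed.

Lemma window_modE n i y z : y = z %[mod k ^ (i + n)] -> window n i y = window n i z.
Proof. by rewrite /window !modn_divl -expnD addnC => ->. Qed.

(* The numeral 1w: its leading digit 1 keeps the window visible in the expansion even when
   w starts with zeros. *)
Definition sync_code (w : seq 'I_k) : nat := k ^ size w + numeral (map val w).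

Lemma all_ord_lt (w : seq 'I_k) : all (gtn k) (map val w).
Proof. by apply/allP => _ /mapP [d _ ->]; exact: ltn_ord. Qed.

Lemma sync_code_lt w : sync_code w < k ^ (size w).+1.
Proof.
have := numeral_lt (all_ord_lt w); rewrite size_map /sync_code expnS => lt_w.
apply: (@leq_trans (k ^ size w * 2)); first by rewrite muln2 -addnn ltn_add2l.
by rewrite mulnC leq_mul2r k_gt1 orbT.
Qed.

Lemma inS_window (Q : finType) (delta : Q -> 'I_k -> Q) w i y :
  synchronizing delta w -> window (size w).+1 i y = sync_code w -> inS delta y.
Proof.
move=> sync_w; rewrite /window; set a := y %/ k ^ i => win_y.
have low_w := low_digits_numeral (all_ord_lt w); rewrite size_map in low_w.
have lt_w := numeral_lt (all_ord_lt w); rewrite size_map in lt_w.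
have a_split : a = (a %/ k ^ (size w).+1 * k + 1) * k ^ size w + numeral (map val w).
  by rewrite {1}(divn_eq a (k ^ (size w).+1)) win_y expnS mulnA mulnDl mul1n addnA.
have a_gt0 : 0 < a by rewrite a_split addn1 ltn_addr // muln_gt0 expk_gt0.
rewrite /inS /word_of (divn_eq y (k ^ i)) -/a digits_mulD ?ltn_pmod //.
rewrite a_split digits_mulD ?addn1 // low_w -catA !pmap_cat (map_pK (@valK _ _ _)).
exact: synchronizing_cat.
Qed.

End Digits.

Lemma count_sum (T : Type) (a : pred T) s : count a s = \sum_(x <- s) (a x : nat).
Proof. by rewrite -sum1_count big_mkcond. Qed.

Lemma count_iota_blocks (P : pred nat) s a T :
  count P (iota s (a * T)) = \sum_(t < T) count P (iota (s + a * t) a).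
Proof.
elim: T => [|T IH]; first by rewrite muln0 big_ord0.
by rewrite big_ord_recr /= -IH mulnS addnC iotaD count_cat.
Qed.

Lemma count_iota_split (P : pred nat) a T :
  count P (iota 0 (a * T)) = \sum_(x <- iota 0 a) count (fun t => P (a * t + x)) (iota 0 T).
Proof.
rewrite count_iota_blocks.
under [LHS]eq_bigr => t _ do rewrite add0n -[a * t]addn0 iotaDl count_map count_sum.
rewrite exchange_big /=; apply: eq_bigr => x _.
by rewrite count_sum -(big_mkord xpredT (fun t => P (a * t + x) : nat)) /index_iota subn0.
Qed.

Section Periodic.
Variables (P : pred nat) (h : nat).
Hypothesis P_periodic : forall y, P (y + h) = P y.

Lemma count_iota_period s : count P (iota s h) = count P (iota 0 h).
Proof.
elim: s => [//|s <-]; move: P_periodic; case: h => [//|h'] P_h.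
by rewrite -{1}[h'.+1]addn1 iotaD count_cat /= addn0 addnC addSnnS P_h.
Qed.

Lemma count_iota_periodic s q : count P (iota s (h * q)) = q * count P (iota 0 h).
Proof.
rewrite count_iota_blocks; under eq_bigr => t _ do rewrite count_iota_period.
by rewrite sum_nat_const card_ord.
Qed.

End Periodic.

Lemma count_dvdn_iota d M : 0 < d -> count (fun y => d %| y) (iota 0 (d * M)) = M.
Proof.
move=> d_gt0; rewrite count_iota_periodic => [|y]; last exact/dvdn_addl/dvdnn.
case: d d_gt0 => [//|d] _; rewrite /= add1n -[RHS]muln1; congr (_ * _.+1).
apply/eqP; rewrite -leqn0 leqNgt -has_count; apply/hasPn => y.
rewrite mem_iota add1n => /andP [y_gt0 y_lt]; apply: contraL y_lt => /(dvdn_leq y_gt0).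
by rewrite -leqNgt.
Qed.

Lemma count_has_le (I T : Type) (F : I -> pred T) r s :
  count (fun x => has (F^~ x) r) s <= \sum_(i <- r) count (F i) s.
Proof.
elim: r => [|i r IH]; first by rewrite big_nil; elim: s.
rewrite big_cons; apply: (leq_trans _ (leq_add (leqnn _) IH)).
by rewrite -count_predUI leq_addr.
Qed.

Lemma count_allpairs (S T : Type) (a : pred S) (b : pred T) s t :
  count (fun p => a p.1 && b p.2) [seq (x, y) | x <- s, y <- t] = count a s * count b t.
Proof.
elim: s => [//|x s IH]; rewrite allpairs_cons count_cat IH count_map /= mulnDl.
congr (_ + _); rewrite (eq_count (a2 := fun y => a x && b y)) //.
by case: (a x); [rewrite mul1n | rewrite mul0n; exact: count_pred0].
Qed.

Lemma perm_iota_chinese h1 h2 : coprime h1 h2 ->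
  perm_eq [seq (x %% h1, x %% h2) | x <- iota 0 (h1 * h2)]
          [seq (x, y) | x <- iota 0 h1, y <- iota 0 h2].
Proof.
move=> co_h12; set crt := fun x => (x %% h1, x %% h2).
have crt_uniq : uniq (map crt (iota 0 (h1 * h2))).
  rewrite map_inj_in_uniq ?iota_uniq // => x y; rewrite !mem_iota /= => x_lt y_lt [eq1 eq2].
  have : x == y %[mod h1 * h2] by rewrite chinese_remainder // eq1 eq2 !eqxx.
  by rewrite !modn_small // => /eqP.
have crt_sub : {subset map crt (iota 0 (h1 * h2)) <= [seq (x, y) | x <- iota 0 h1, y <- iota 0 h2]}.
  move=> p /mapP [x]; rewrite mem_iota /= => x_lt ->.
  have /andP [h1_gt0 h2_gt0] : (0 < h1) && (0 < h2) by rewrite -muln_gt0 (leq_ltn_trans _ x_lt).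
  by rewrite allpairs_f // mem_iota ltn_pmod.
apply: uniq_perm => //; first by rewrite allpairs_uniq ?iota_uniq // => -[? ?] [? ?] _ _ [-> ->].
apply: (uniq_min_size crt_uniq crt_sub _).2.
by rewrite size_allpairs !size_iota size_map size_iota.
Qed.

Lemma count_sq_mod_coprime h1 h2 m : coprime h1 h2 ->
  count (fun x => x ^ 2 == m %[mod h1 * h2]) (iota 0 (h1 * h2)) =
  count (fun x => x ^ 2 == m %[mod h1]) (iota 0 h1) *
  count (fun x => x ^ 2 == m %[mod h2]) (iota 0 h2).
Proof.
move=> co_h12; rewrite -count_allpairs -(permP (perm_iota_chinese co_h12)) count_map.
by apply: eq_count => x; rewrite /= !modnXm chinese_remainder.
Qed.

Lemma linear_congruence a K y : 0 < a -> 0 < K -> gcdn a K %| y ->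
  exists2 t, t < K & a * t = y %[mod K].
Proof.
move=> a_gt0 K_gt0 g_dvd_y; have [u _ a_dvd] := Bezoutl K a_gt0.
exists (((gcdn a K + u * K) %/ a * (y %/ gcdn a K)) %% K); first exact: ltn_pmod.
rewrite modnMmr mulnA [a * _]mulnC (divnK a_dvd) mulnDl [gcdn a K * _]mulnC (divnK g_dvd_y).
by rewrite mulnAC addnC modnMDl.
Qed.

Definition exceptional k j x : bool := has (fun p => p ^ j %| x) (primes k).

Lemma gcdn_double_dvd_exp k j c x : 0 < k -> 0 < x ->
  ~~ exceptional k j x -> gcdn (2 * x) (k ^ c) %| k ^ j.
Proof.
move=> k_gt0 x_gt0 /hasPn x_free.
have g_gt0 : 0 < gcdn (2 * x) (k ^ c) by rewrite gcdn_gt0 muln_gt0 x_gt0.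
apply/(dvdn_partP _ g_gt0) => p p_g; have := p_g; rewrite mem_primes => /and3P [p_pr _ p_dvd_g].
have p_k : p \in primes k.
  have : p %| k ^ c by exact: dvdn_trans p_dvd_g (dvdn_gcdr _ _).
  by rewrite mem_primes p_pr k_gt0 Euclid_dvdX // => /andP [].
rewrite p_part pfactor_dvdn ?expn_gt0 ?k_gt0 // lognX.
have le_g : logn p (gcdn (2 * x) (k ^ c)) <= logn p (2 * x).
  by apply: dvdn_leq_log; [rewrite muln_gt0 x_gt0 | exact: dvdn_gcdl].
have log_2x : logn p (2 * x) = (p == 2) + logn p x by rewrite lognM // logn_prime.
have log_x : logn p x < j by have := x_free p p_k; rewrite pfactor_dvdn // -ltnNge.
have log_k : 0 < logn p k by rewrite logn_gt0.
have : j <= j * logn p k by rewrite leq_pmulr.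
by case: (p == 2) log_2x => /= log_2x; lia.
Qed.

Lemma count_exceptional_le k j lam : j <= lam ->
  count (exceptional k j) (iota 0 (k ^ lam)) * 2 ^ j <= size (primes k) * k ^ lam.
Proof.
rewrite /exceptional => le_j; apply: (leq_trans (leq_mul (count_has_le _ _ _) (leqnn _))).
rewrite big_distrl -sum1_size big_distrl /= big_seq [X in _ <= X]big_seq.
apply: leq_sum => p; rewrite mem_primes => /and3P [p_pr _ p_dvd_k].
have pj_dvd : p ^ j %| k ^ lam by exact: dvdn_trans (dvdn_exp2r _ p_dvd_k) (dvdn_exp2l _ le_j).
rewrite -(divnK pj_dvd) [_ * p ^ j]mulnC count_dvdn_iota ?expn_gt0 ?prime_gt0 //.
rewrite mul1n [p ^ j * _]mulnC leq_mul2l; case: (j) => [|j']; first by rewrite orbT.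
by rewrite leq_exp2r // prime_gt1 // orbT.
Qed.

Section SquareWindows.
Variables k n V : nat.
Hypotheses (k_gt1 : 1 < k) (V_lt : V < k ^ n).

Let k_gt0 : 0 < k. Proof. exact: ltnW. Qed.
Let expk_gt0 e : 0 < k ^ e. Proof. by rewrite expn_gt0 k_gt0. Qed.

Lemma window_shift j s : exists R, window k n j (s + k ^ j * R) = V.
Proof.
set q := s %/ k ^ j; exists (V + k ^ n * q - q).
have le_q : q <= V + k ^ n * q by rewrite (leq_trans (leq_pmull _ (expk_gt0 n))) ?leq_addl.
rewrite /window [s + _]addnC [k ^ j * _]mulnC divnMDl // -/q subnK //.
by rewrite addnC mulnC modnMDl modn_small.
Qed.

Lemma window_sq_lift lam j x : j + n <= lam -> 0 < x ->
  gcdn (2 * x) (k ^ (j + n)) %| k ^ j ->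
  exists2 t, t < k ^ (j + n) & window k n (lam + j) ((k ^ lam * t + x) ^ 2) = V.
Proof.
move=> le_lam x_gt0 g_dvd; set s := x ^ 2 %/ k ^ lam.
have [R <-] := window_shift j s.
have x2_gt0 : 0 < 2 * x by rewrite muln_gt0 x_gt0.
have [t t_lt t_sol] := @linear_congruence (2 * x) (k ^ (j + n)) (k ^ j * R)
  x2_gt0 (expk_gt0 _) (dvdn_trans g_dvd (dvdn_mulr _ (dvdnn _))).
exists t => //; rewrite window_addl.
have -> : (k ^ lam * t + x) ^ 2 = (2 * x * t + t ^ 2 * k ^ lam) * k ^ lam + x ^ 2.
  by move: (k ^ lam) => K; nia.
rewrite divnMDl // -/s; apply: window_modE.
have -> : k ^ lam = k ^ (lam - (j + n)) * k ^ (j + n) by rewrite -expnD subnK.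
rewrite mulnA addnAC -modnDmr modnMl addn0.
by rewrite -modnDml t_sol modnDml addnC.
Qed.

Definition hits lam x : bool :=
  [exists i : 'I_lam.+1, (i + n <= lam) && (window k n i (x ^ 2) == V)].

Definition misses lam : nat := count (predC (hits lam)) (iota 0 (k ^ lam)).

Lemma hits_lift lam c x y : hits lam x -> y = x %[mod k ^ lam] -> hits (lam + c) y.
Proof.
move=> /existsP [i /andP [le_i /eqP win_i]] y_x; apply/existsP.
have i_lt : i < (lam + c).+1 by rewrite ltnS (leq_trans (leq_ord i)) ?leq_addr.
exists (Ordinal i_lt); rewrite /= (leq_trans le_i (leq_addr _ _)) -win_i /=.
apply/eqP/window_modE; have dvd_lam : k ^ (i + n) %| k ^ lam by rewrite dvdn_exp2l.
by rewrite -[LHS](modn_dvdm _ dvd_lam) -modnXm y_x modnXm modn_dvdm.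
Qed.

Lemma count_missing_lifts_le lam c x :
  count (fun t => ~~ hits (lam + c) (k ^ lam * t + x)) (iota 0 (k ^ c))
    <= k ^ c * ~~ hits lam x.
Proof.
have [hit_x|_] := boolP (hits lam x); last first.
  by rewrite muln1 (leq_trans (count_size _ _)) ?size_iota.
rewrite muln0 leqn0 eqn0Ngt -has_count; apply/hasPn => t _; rewrite negbK.
by apply: hits_lift hit_x _; rewrite mulnC modnMDl.
Qed.

Lemma count_missing_lifts_lt lam j x : j + n <= lam -> ~~ exceptional k j x ->
  count (fun t => ~~ hits (lam + (j + n)) (k ^ lam * t + x)) (iota 0 (k ^ (j + n)))
    < k ^ (j + n).
Proof.
move=> le_lam x_free.
have x_gt0 : 0 < x.
  rewrite lt0n; apply: contraNneq x_free => ->; apply/hasP; exists (pdiv k) => //.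
  by rewrite mem_primes pdiv_prime // k_gt0 pdiv_dvd.
have [t t_lt win_t] := window_sq_lift le_lam x_gt0 (gcdn_double_dvd_exp _ k_gt0 x_gt0 x_free).
rewrite -{2}(size_iota 0 (k ^ (j + n))) ltn_neqAle count_size andbT -all_count.
apply/allPn; exists t; first by rewrite mem_iota.
rewrite /= negbK; apply/existsP.
have i_lt : lam + j < (lam + (j + n)).+1 by rewrite ltnS addnA leq_addr.
by exists (Ordinal i_lt); rewrite /= -addnA leqnn win_t eqxx.
Qed.

Lemma misses_lift lam c : misses (lam + c) <= k ^ c * misses lam.
Proof.
rewrite /misses expnD count_iota_split count_sum big_distrr /=.
by apply: leq_sum => x _; apply: count_missing_lifts_le.
Qed.

Lemma misses_contract lam j : j + n <= lam ->
  misses (lam + (j + n)) + misses lam <=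
  k ^ (j + n) * misses lam + count (exceptional k j) (iota 0 (k ^ lam)).
Proof.
move=> le_lam; rewrite /misses expnD count_iota_split !count_sum big_distrr -!big_split /=.
apply: leq_sum => x _; have le_lifts := count_missing_lifts_le lam (j + n) x.
have [x_exc|x_free] := boolP (exceptional k j x).
  by case: (hits lam x) le_lifts => /=; lia.
have := count_missing_lifts_lt le_lam x_free.
by case: (hits lam x) le_lifts => /=; lia.
Qed.

End SquareWindows.

Lemma inS_hits k (Q : finType) (delta : Q -> 'I_k -> Q) w lam x : 1 < k ->
  synchronizing delta w -> hits k (size w).+1 (sync_code w) lam x ->
  inS delta (x ^ 2 %% k ^ lam).
Proof.
move=> k_gt1 sync_w /existsP [i /andP [le_i /eqP win_i]].
apply: (inS_window k_gt1 (i := i) sync_w); rewrite -win_i; apply: window_modE.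
by rewrite modn_dvdm // dvdn_exp2l.
Qed.

Lemma sum_count_sq_notin (P : pred nat) K : 0 < K ->
  \sum_(m < K | ~~ P m) count (fun x => x ^ 2 == m %[mod K]) (iota 0 K) =
  count (fun x => ~~ P (x ^ 2 %% K)) (iota 0 K).
Proof.
move=> K_gt0; under eq_bigr => m _ do rewrite count_sum.
rewrite exchange_big count_sum /=; apply: eq_bigr => x _.
have y_lt : x ^ 2 %% K < K by rewrite ltn_pmod.
rewrite big_mkcond (bigD1 (Ordinal y_lt)) //= modn_mod eqxx big1 ?addn0 => [|m m_neq].
  by case: (P _).
move: m_neq; rewrite -val_eqE /= eq_sym (modn_small (ltn_ord m)) => /negbTE ->.
by case: (~~ P m).
Qed.

Local Open Scope R_scope.

Lemma sum_csq_notin (P : pred nat) K : (0 < K)%N ->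
  \big[Rplus/R0]_(m < K | ~~ P m) csq m K =
  INR (count (fun x => ~~ P (x ^ 2 %% K)) (iota 0 K)) / INR K.
Proof.
move=> K_gt0; rewrite -sum_count_sq_notin //.
apply: (big_ind2 (fun r (c : nat) => r = INR c / INR K)) => [|r1 c1 r2 c2 -> ->|//].
  by rewrite /Rdiv Rmult_0_l.
by rewrite plus_INR /Rdiv Rmult_plus_distr_r.
Qed.

Lemma INR_ratio_bounds a b : (a <= b)%N -> (0 < b)%N -> 0 <= INR a / INR b <= 1.
Proof.
move=> /leP/le_INR le_ab /ltP/lt_0_INR b_gt0; split.
  by apply: Rmult_le_pos; [apply: pos_INR | left; apply: Rinv_0_lt_compat].
by apply: (Rmult_le_reg_r (INR b)) => //; rewrite /Rdiv Rmult_assoc Rinv_l; lra.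
Qed.

Lemma Rabs_ratio_sub_le a C h L : 0 < h -> 0 < L ->
  h * a <= C * L + h * h -> C * L <= h * a + h * h -> Rabs (a / L - C / h) <= h / L.
Proof.
move=> h_gt0 L_gt0 le_a le_C; have hL_gt0 : 0 < h * L by apply: Rmult_lt_0_compat.
replace (a / L - C / h) with ((h * a - C * L) * / (h * L)) by (field; lra).
replace (h / L) with (h * h * / (h * L)) by (field; lra).
rewrite Rabs_mult (Rabs_right (/ (h * L))); last by left; apply: Rinv_0_lt_compat.
by apply: Rmult_le_compat_r; [left; apply: Rinv_0_lt_compat | apply: Rabs_le; lra].
Qed.

Lemma ratio_lift_le a b M K : 0 < M -> 0 < K -> a <= K * b -> a / (M * K) <= b / M.
Proof.
move=> M_gt0 K_gt0 le_ab; replace (b / M) with (K * b / (M * K)) by (field; lra).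
by apply: Rmult_le_compat_r; [left; apply: Rinv_0_lt_compat; nra | lra].
Qed.

Lemma ratio_contraction B' B E M K e : 0 < M -> 1 <= K ->
  B' + B <= K * B + E -> E <= e * M ->
  B' / (M * K) <= (1 - / K) * (B / M) + (1 - (1 - / K)) * e.
Proof.
move=> M_gt0 K_ge1 le_B' le_E; have MK_gt0 : 0 < M * K by nra.
replace ((1 - / K) * (B / M) + (1 - (1 - / K)) * e) with ((K * B - B + e * M) / (M * K))
  by (field; lra).
by apply: Rmult_le_compat_r; [left; apply: Rinv_0_lt_compat | lra].
Qed.

Lemma cv0_contraction (f : nat -> R) :
  (forall l, 0 <= f l <= 1) -> (forall l d, f (l + d)%N <= f l) ->
  (forall e, 0 < e -> exists c q N, 0 <= q < 1 /\
     forall l, (N <= l)%N -> f (l + c)%N <= q * f l + (1 - q) * e) ->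
  Un_cv f 0.
Proof.
move=> f_bounds f_noninc f_contract eps eps_gt0.
have [c [q [N [[q_ge0 q_lt1] f_c]]]] := f_contract (eps / 2) ltac:(lra).
have f_iter m : f (N + m * c)%N <= eps / 2 + q ^ m.
  elim: m => [|m IH]; first by rewrite mul0n addn0 /=; have := f_bounds N; lra.
  rewrite mulSnr addnA; apply: (Rle_trans _ _ _ (f_c _ (leq_addr _ _))) => /=; nra.
have [M q_M] := pow_lt_1_zero q ltac:(rewrite Rabs_right; lra) (eps / 2) ltac:(lra).
exists (N + M * c)%N => l /leP le_l; rewrite /R_dist Rminus_0_r Rabs_right; last first.
  by have := f_bounds l; lra.
have := q_M M (le_n M); rewrite Rabs_right; last by apply/Rle_ge/pow_le.
have := f_iter M; have := f_noninc (N + M * c)%N (l - (N + M * c))%N.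
by rewrite subnKC //; lra.
Qed.

Lemma cv_density_periodic (P : pred nat) h s : (0 < h)%N -> (forall y, P (y + h)%N = P y) ->
  Un_cv (fun L => INR (count P (iota s L)) / INR L) (INR (count P (iota 0 h)) / INR h).
Proof.
move=> h_gt0 P_periodic eps eps_gt0.
have h_gt0R : 0 < INR h by apply/lt_0_INR/ltP.
have [N N_gt] := INR_unbounded (INR h / eps).
exists N.+1 => L /leP le_L; have L_gt0 : 0 < INR L by apply/lt_0_INR/ltP/(leq_trans _ le_L).
have le_NL : INR N <= INR L by apply/le_INR/leP/ltnW.
set C := count P (iota 0 h); set q := (L %/ h)%N; set r := (L %% h)%N.
set d := count P (iota (s + h * q) r).
have L_eq : L = (h * q + r)%N by rewrite mulnC -divn_eq.
have cnt_eq : count P (iota s L) = (q * C + d)%N.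
  by rewrite {1}L_eq iotaD count_cat count_iota_periodic.
have le_d : (d <= h)%N by rewrite (leq_trans (count_size _ _)) // size_iota ltnW // ltn_pmod.
have le_C : (C <= h)%N by rewrite (leq_trans (count_size _ _)) // size_iota.
have le_r : (r <= h)%N by rewrite ltnW // ltn_pmod.
apply: (Rle_lt_trans _ (INR h / INR L)); last first.
  apply: (Rmult_lt_reg_r (INR L / eps)); first exact: Rdiv_lt_0_compat.
  replace (INR h / INR L * (INR L / eps)) with (INR h / eps) by (field; lra).
  replace (eps * (INR L / eps)) with (INR L) by (field; lra).
  lra.
apply: Rabs_ratio_sub_le => //; rewrite -!mult_INR -!plus_INR; apply/le_INR/leP.
  by rewrite cnt_eq L_eq; nia.
by rewrite cnt_eq L_eq; nia.
Qed.

Lemma cv_count_sq h m : (0 < h)%N ->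
  Un_cv (fun L => INR (count_sq m h L) / INR L) (csq m h).
Proof. by move=> h_gt0; apply: cv_density_periodic => // y; rewrite -modnXm modnDr modnXm. Qed.

Lemma csq_mul_coprime h1 h2 m : (0 < h1)%N -> (0 < h2)%N -> coprime h1 h2 ->
  csq m (h1 * h2) = csq m h1 * csq m h2.
Proof.
move=> h1_gt0 h2_gt0 co_h12; rewrite /csq count_sq_mod_coprime // !mult_INR.
by field; split; apply: not_0_INR; lia.
Qed.

Lemma cv0_misses_ratio k n V : (1 < k)%N -> (V < k ^ n)%N ->
  Un_cv (fun lam => INR (misses k n V lam) / INR (k ^ lam)) 0.
Proof.
move=> k_gt1 V_lt; have expk_gt0 e : (0 < k ^ e)%N by rewrite expn_gt0 ltnW.
have expk_gt0R e : 0 < INR (k ^ e) by apply/lt_0_INR/ltP.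
apply: cv0_contraction => [l|l d|e e_gt0].
- by apply: INR_ratio_bounds => //; rewrite (leq_trans (count_size _ _)) ?size_iota.
- rewrite expnD mult_INR; apply: ratio_lift_le => //.
  by have /leP/le_INR := misses_lift k n V l d; rewrite mult_INR.
have [j P_lt] : exists j, INR (size (primes k)) < e * INR (2 ^ j).
  have [j j_gt] := INR_unbounded (INR (size (primes k)) / e).
  have lt_j : INR j < INR (2 ^ j) by apply/lt_INR/ltP/ltn_expl.
  exists j; have := Rmult_lt_compat_l e _ _ e_gt0 (Rlt_trans _ _ _ j_gt lt_j).
  by replace (e * (INR (size (primes k)) / e)) with (INR (size (primes k))) by (field; lra).
exists (j + n)%N, (1 - / INR (k ^ (j + n))), (j + n)%N; split.
  have := Rinv_0_lt_compat _ (expk_gt0R (j + n)%N).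
  have : / INR (k ^ (j + n)) <= 1.
    by rewrite -Rinv_1; apply: Rinv_le_contravar; [lra | apply: (le_INR 1); apply/leP].
  lra.
move=> l le_l.
have /leP/le_INR := misses_contract k_gt1 V_lt le_l; rewrite !plus_INR !mult_INR => le_B.
have /leP/le_INR := count_exceptional_le k (leq_trans (leq_addr n j) le_l).
rewrite !mult_INR => le_E; rewrite expnD mult_INR.
apply: (ratio_contraction (expk_gt0R l) _ le_B); first by apply: (le_INR 1); apply/leP.
have : 0 < INR (2 ^ j) by apply/lt_0_INR/ltP; rewrite expn_gt0.
by have := expk_gt0R l; nra.
Qed.

Lemma cv0_nonsync_mass k (Q : finType) (delta : Q -> 'I_k -> Q) : (1 < k)%N ->
  (exists w, synchronizing delta w) ->
  Un_cv (fun lam => \big[Rplus/R0]_(m < k ^ lam | ~~ inS_lambda delta lam m)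
                      csq m (k ^ lam)) 0.
Proof.
move=> k_gt1 [w sync_w] eps eps_gt0.
have [N misses_N] := cv0_misses_ratio k_gt1 (sync_code_lt k_gt1 w) eps_gt0.
exists N => lam le_lam; have := misses_N lam le_lam; rewrite /R_dist !Rminus_0_r.
under eq_bigl => m do rewrite /inS_lambda ltn_ord andbT.
have expk_gt0 : (0 < k ^ lam)%N by rewrite expn_gt0 ltnW.
rewrite sum_csq_notin //.
have le_count : (count (fun x => ~~ inS delta (x ^ 2 %% k ^ lam)) (iota 0 (k ^ lam))
    <= misses k (size w).+1 (sync_code w) lam)%N.
  by apply: sub_count => x /=; apply: contraNN; apply: inS_hits.
have misses_le : (misses k (size w).+1 (sync_code w) lam <= k ^ lam)%N.
  by rewrite (leq_trans (count_size _ _)) ?size_iota.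
have [count_ge0 _] := INR_ratio_bounds (leq_trans le_count misses_le) expk_gt0.
have [misses_ge0 _] := INR_ratio_bounds misses_le expk_gt0.
have /leP/le_INR le_countR := le_count.
have : 0 < / INR (k ^ lam) by apply/Rinv_0_lt_compat/lt_0_INR/ltP.
by rewrite !Rabs_right; [nra | lra | lra].
Qed.

Local Close Scope R_scope.

Theorem proposition8p2 :
  (forall h m : nat, 0 < h -> m < h ->
     Un_cv (fun L => Rdiv (INR (count_sq m h L)) (INR L)) (csq m h))
  /\
  (forall h1 h2 m : nat, 0 < h1 -> 0 < h2 -> coprime h1 h2 -> m < h1 * h2 ->
     csq m (h1 * h2) = Rmult (csq m h1) (csq m h2))
  /\
  (forall (k : nat) (Q : finType) (delta : Q -> 'I_k -> Q) (q0 : Q),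
     2 <= k ->
     (exists w : seq 'I_k, synchronizing delta w) ->
     Un_cv (fun lam => \big[Rplus/R0]_(m < k ^ lam | ~~ inS_lambda delta lam m)
                          csq m (k ^ lam)) R0).
Proof.
split; first by move=> h m h_gt0 _; exact: cv_count_sq.
split; first by move=> h1 h2 m h1_gt0 h2_gt0 co_h12 _; exact: csq_mul_coprime.
by move=> k Q delta _ k_gt1; exact: cv0_nonsync_mass.
Qed.
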